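(* Let $G$ be a $2$-connected non-Hamiltonian graph of order $n\ge 4$. Then $px_3(G)\le\lfloor n/2\rfloor$.
   Context: All graphs are finite, simple and undirected. An edge-coloring assigns colors to edges, adjacent edges being allowed to share a color. A tree in an edge-colored graph is proper if no two adjacent edges of it receive the same color. An edge-coloring of $G$ is a $3$-proper coloring if for every $3$-element set $S\subseteq V(G)$ there is a proper tree in $G$ containing all vertices of $S$; $px_3(G)$ is the minimum number of colors in a $3$-proper coloring of $G$. *)

(* A finite simple graph is a finType T with a symmetric,
   irreflexive adjacency relation e : rel T.  Edges are the 2-sets [set x; y]
   with e x y. *)
From mathcomp Require Import all_boot.
Set Implicit Arguments. Unset Strict Implicit. Unset Printing Implicit Defensive.

Section Graphs.
Variable T : finType.
Variable e : rel T.

Definition two_connected : bool :=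
  (2 < #|T|) &&
  [forall x, forall y, connect e x y] &&
  [forall v, forall x, forall y, (x != v) && (y != v) ==>
      connect [rel a b | [&& a != v, b != v & e a b]] x y].

Definition hamiltonian : Prop :=
  2 < #|T| /\ exists s : seq T, [/\ uniq s, size s = #|T| & cycle e s].

Definition is_subtree (V : {set T}) (E : {set {set T}}) : bool :=
  [forall f in E, exists x, exists y,
      [&& x \in V, y \in V, e x y & f == [set x; y]]] &&
  [forall x in V, forall y in V, connect [rel a b | [set a; b] \in E] x y] &&
  (#|E| == #|V| - 1) && (V != set0).

Definition proper_on (k : nat) (c : {ffun {set T} -> 'I_k})
    (E : {set {set T}}) : bool :=
  [forall f1 in E, forall f2 in E,
     (f1 != f2) && (f1 :&: f2 != set0) ==> (c f1 != c f2)].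

Definition three_proper (k : nat) (c : {ffun {set T} -> 'I_k}) : bool :=
  [forall S : {set T}, (#|S| == 3) ==>
     [exists V : {set T}, exists E : {set {set T}},
        [&& is_subtree V E, S \subset V & proper_on c E]]].

Definition k_three_proper (k : nat) : bool :=
  [exists c : {ffun {set T} -> 'I_k}, three_proper c].

(* Only the
   (at most #|{set T}|) colour values on sets matter, so if some k works then
   some k <= #|{set T}| works; the search range is therefore exhaustive. *)
Definition px3 : nat := find k_three_proper (iota 0 (#|{set T}|).+1).

End Graphs.

From mathcomp Require Import all_boot zify.
Set Implicit Arguments. Unset Strict Implicit. Unset Printing Implicit Defensive.

(* A spanning tree whose edges are properly coloured is a proper tree through
   any three vertices, and a tree of maximum degree k can be properly
   edge-coloured with k colours (the children of a vertex take the k - 1 colours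
   following the colour of its parent edge).  So it suffices to find a spanning
   tree of maximum degree at most k = n/2.  Take a spanning tree minimising the
   excess sum_u (deg u - k)_+.  If deg v > k, then, G - v being connected, some
   edge xy of G joins two components of T - v; the degree sum 2(n - 1) gives
   deg x + deg y <= k + 1, say deg y < k.  Replacing the edge av of T, with a in
   the component of x, by xy lowers the excess: if deg x >= k, all vertices
   other than v and x are leaves, so a = x. *)

Lemma set2_injr (T : finType) (a b c : T) : [set a; b] = [set a; c] -> b = c.
Proof.
move=> abc; have : b \in [set a; c] by rewrite -abc !inE eqxx orbT.
case/set2P=> [ba|//]; have : c \in [set a; b] by rewrite abc !inE eqxx orbT.
by case/set2P=> [ca|//]; rewrite ba ca.
Qed.

Section ParentMap.
Variables (T : finType) (R : rel T).
Hypothesis Rsym : symmetric R.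

Lemma path_exit (A : {set T}) s p :
  path R s p -> s \in A -> last s p \notin A ->
  exists w w', [/\ w \in A, w' \notin A & R w w'].
Proof.
elim: p s => [|z p IH] s /=; first by move=> _ ->.
case/andP=> Rsz pz sA lA.
case: (boolP (z \in A)) => zA; first exact: IH zA lA.
by exists s, z.
Qed.

Definition parent_map_on r (A : {set T}) (par : T -> T) (h : T -> nat) :=
  forall x, x \in A -> x != r -> [/\ par x \in A, R x (par x) & h (par x) < h x].

Lemma parent_map_extend r (A : {set T}) par h u :
  r \in A -> parent_map_on r A par h -> connect R r u -> u \notin A ->
  exists u' par' h', u' \notin A /\ parent_map_on r (u' |: A) par' h'.
Proof.
move=> rA Ah /connectP [p pr ->] uA.
have [w [u' [wA u'A Rwu']]] := path_exit pr rA uA.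
have neq_u' z : z \in A -> (z == u') = false.
  by move=> zA; apply/negbTE; apply: contraNneq u'A => <-.
exists u', (fun z => if z == u' then w else par z),
  (fun z => if z == u' then (h w).+1 else h z); split=> // x.
rewrite in_setU1 => /predU1P [->|xA] xr /=.
  by rewrite eqxx in_setU1 wA orbT Rsym neq_u'.
have [pA Rp hp] := Ah x xA xr.
by rewrite !neq_u' // in_setU1 pA orbT.
Qed.

Lemma exists_parent_map r :
  exists par h, forall x, connect R r x -> x != r -> R x (par x) /\ h (par x) < h x.
Proof.
suff grow m (A : {set T}) par h : #|~: A| <= m -> r \in A -> parent_map_on r A par h ->
    exists par' h', forall x, connect R r x -> x != r -> R x (par' x) /\ h' (par' x) < h' x.
  by apply: (grow _ [set r] id (fun=> 0) (leqnn _) (set11 r)) => x; rewrite inE => ->.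
elim: m A par h => [|m IH] A par h Am rA Ah;
  (case: (boolP [forall x, connect R r x ==> (x \in A)]) =>
     [/forall_inP CA|/forall_inPn [u ru uA]];
   first by exists par, h => x rx xr; have [] := Ah x (CA x rx) xr).
  by move: Am; rewrite leqn0 cards_eq0 => /eqP/setP/(_ u); rewrite !inE uA.
have [u' [par' [h' [u'A A'h']]]] := parent_map_extend rA Ah ru uA.
apply: (IH _ par' h' _ _ A'h'); last by rewrite in_setU1 rA orbT.
have := cardsC A; have := cardsC (u' |: A); rewrite cardsU1 u'A; lia.
Qed.


Lemma parent_edge_inj par (h : T -> nat) (C : {set T}) :
  (forall x, x \in C -> h (par x) < h x) -> {in C &, injective (fun x => [set x; par x])}.
Proof.
move=> hC x y xC yC /= xy_eq; apply/eqP; apply/negP => /negP neq_xy.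
have : x \in [set y; par y] by rewrite -xy_eq !inE eqxx.
have : y \in [set x; par x] by rewrite xy_eq !inE eqxx.
rewrite !inE eq_sym (negbTE neq_xy) /= => /eqP y_px /eqP x_py.
by have := hC x xC; have := hC y yC; rewrite -y_px -x_py; lia.
Qed.

Lemma connect_to_root r par (h : T -> nat) :
  (forall x, x != r -> R x (par x) /\ h (par x) < h x) -> forall x, connect R x r.
Proof.
move=> parP x; have [m] := ubnP (h x); elim: m x => // m IH x.
case: (eqVneq x r) => [-> _|xr lt_m]; first exact: connect0.
have [Rx hx] := parP x xr; apply: connect_trans (connect1 Rx) (IH _ _).
exact: leq_trans hx lt_m.
Qed.

Lemma card_component (F : {set {set T}}) r :
  (forall a b, R a b -> [set a; b] \in F) -> #|[set x | connect R r x]| <= #|F|.+1.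
Proof.
move=> RF; have [par [h parP]] := exists_parent_map r.
set C := [set x | connect R r x].
have hC x : x \in C :\ r -> h (par x) < h x.
  by rewrite !inE => /andP [xr rx]; case: (parP x rx xr).
have sub : [set [set x; par x] | x in C :\ r] \subset F.
  apply/subsetP=> f /imsetP [x]; rewrite !inE => /andP [xr rx] ->.
  by apply: RF; case: (parP x rx xr).
have := subset_leq_card sub; rewrite card_in_imset; last exact: parent_edge_inj hC.
by rewrite (cardsD1 r C) inE connect0.
Qed.

End ParentMap.

Definition avoiding (T : eqType) (v : T) (R : rel T) : rel T :=
  [rel a b | [&& a != v, b != v & R a b]].

Lemma avoiding_sym (T : eqType) (v : T) (R : rel T) :
  symmetric R -> symmetric (avoiding v R).
Proof. by move=> Rsym a b; rewrite /avoiding /= Rsym andbCA. Qed.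

Section SpanningTrees.
Variables (T : finType) (e : rel T).
Hypotheses (e_sym : symmetric e) (e_irr : irreflexive e).

Lemma two_connected_connect : two_connected e ->
  [/\ 2 < #|T|, forall x y, connect e x y &
      forall v x y, x != v -> y != v -> connect (avoiding v e) x y].
Proof.
case/andP=> /andP [n3 /forallP conn] /forallP conn_v; split=> // [x y|v x y xv yv].
  exact: (forallP (conn x)).
by have /forallP/(_ y) := forallP (conn_v v) x; rewrite xv yv.
Qed.

Definition tree_adj (E : {set {set T}}) : rel T := fun a b => [set a; b] \in E.

Definition deg (E : {set {set T}}) u := #|[set f in E | u \in f]|.

Definition spanning_tree (E : {set {set T}}) : Prop :=
  [/\ forall f, f \in E -> exists x y, e x y /\ f = [set x; y],
      forall x y, connect (tree_adj E) x y & #|E| = #|T| - 1].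

Lemma tree_adj_sym E : symmetric (tree_adj E).
Proof. by move=> a b; rewrite /tree_adj setUC. Qed.

Lemma spanning_tree_subtree E : 0 < #|T| -> spanning_tree E -> is_subtree e setT E.
Proof.
move=> n0 [edgeE connE cardE]; rewrite /is_subtree cardsT cardE eqxx andbT.
apply/andP; split; last by apply/set0Pn; case/card_gt0P: n0 => x _; exists x.
apply/andP; split.
  apply/forall_inP=> f /edgeE [x [y [exy ->]]].
  by apply/existsP; exists x; apply/existsP; exists y; rewrite !inE exy eqxx.
by apply/forall_inP=> x _; apply/forall_inP=> y _; exact: connE.
Qed.

Lemma deg_sum E u : deg E u = \sum_(f in E) (u \in f).
Proof.
rewrite /deg -sum1_card [LHS]big_mkcond [RHS]big_mkcond /=.
by apply: eq_bigr => f _; rewrite !inE; case: (f \in E); case: (u \in f).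
Qed.

Lemma deg_setU1 (X : {set {set T}}) f u : f \notin X -> deg (f |: X) u = (u \in f) + deg X u.
Proof. by move=> fX; rewrite !deg_sum big_setU1. Qed.

Lemma deg_setD1 (X : {set {set T}}) f u : f \in X -> deg X u = (u \in f) + deg (X :\ f) u.
Proof. by move=> fX; rewrite !deg_sum (big_setD1 f). Qed.

Lemma exit_neighbour E v s t :
  connect (tree_adj E) s t -> s != v -> ~~ connect (avoiding v (tree_adj E)) s t ->
  exists2 a, connect (avoiding v (tree_adj E)) s a & tree_adj E a v.
Proof.
case/connectP=> p + ->; elim: p s => [|z p IH] s /=; first by rewrite connect0.
case/andP=> Esz pz sv nc; case: (eqVneq z v) => [<-|zv]; first by exists s.
have Fsz : avoiding v (tree_adj E) s z by rewrite /avoiding /= sv zv.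
have [|a za av] := IH z pz zv; first by apply: contra nc; apply: connect_trans (connect1 Fsz).
by exists a => //; apply: connect_trans (connect1 Fsz) za.
Qed.

Definition excess k E := \sum_u (deg E u - k).

Lemma excess_lt k E E' v : (forall u, deg E' u <= deg E u \/ deg E' u <= k) ->
  deg E' v < deg E v -> k < deg E v -> excess k E' < excess k E.
Proof.
move=> le_deg lt_v lt_k; rewrite /excess (bigD1 v) //= [X in _ < X](bigD1 v) //=.
rewrite -addSn leq_add //; first lia.
by apply: leq_sum => u _; case: (le_deg u); lia.
Qed.

Lemma excess_exchange k E v a x y (E' := [set x; y] |: (E :\ [set a; v])) :
  [set a; v] \in E -> [set x; y] \notin E :\ [set a; v] -> x != v -> y != v ->
  k < deg E v -> deg E y < k -> (k <= deg E x -> a = x) -> excess k E' < excess k E.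
Proof.
move=> avE xyE xv yv dv dy ax.
have deg_E' u : deg E' u + (u \in [set a; v]) = deg E u + (u \in [set x; y]).
  by rewrite deg_setU1 // (deg_setD1 u avE) addnC addnA addnAC.
apply: (excess_lt (v := v)) => // [u|]; last first.
  have := deg_E' v.
  by rewrite !inE eqxx orbT ![v == _]eq_sym (negbTE xv) (negbTE yv) addn1 addn0 => <-.
have := deg_E' u; case/boolP: (u \in [set x; y]) => [/set2P [->|->]|_]; last first.
- by rewrite addn0 => <-; left; apply: leq_addr.
- by move=> deg_y; right; move: deg_y dy; clear; lia.
case: (ltnP (deg E x) k) => [deg_x|/ax ->].
  by move=> deg_x'; right; move: deg_x' deg_x; clear; lia.
by rewrite set21 => /addIn ->; left.
Qed.

Lemma card_parent_edges r par (h : T -> nat) : (forall x, x != r -> h (par x) < h x) ->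
  #|[set [set x; par x] | x in [set~ r]]| = #|T| - 1.
Proof.
move=> hpar; rewrite card_in_imset ?cardsC1 ?subn1 //.
by apply: (@parent_edge_inj _ _ h) => x; rewrite !inE; apply: hpar.
Qed.

Section Tree.
Variable E : {set {set T}}.
Hypothesis treeE : spanning_tree E.

Lemma tree_adj_neq a b : tree_adj E a b -> a != b.
Proof.
have [edgeE _ _] := treeE; case/edgeE=> [x [y [exy ab]]].
apply: contraTneq exy => a_b; move: ab; rewrite a_b setUid => xy.
have : x \in [set b] by rewrite xy !inE eqxx.
have : y \in [set b] by rewrite xy !inE eqxx orbT.
by rewrite !inE => /eqP -> /eqP ->; rewrite e_irr.
Qed.

Lemma handshake : \sum_u deg E u = 2 * #|E|.
Proof.
have [edgeE _ _] := treeE.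
under eq_bigr do rewrite deg_sum.
rewrite exchange_big /= (eq_bigr (fun=> 2)); first by rewrite sum_nat_const mulnC.
move=> f /edgeE [x [y [exy ->]]].
have xy : x != y by apply: contraTneq exy => ->; rewrite e_irr.
transitivity #|[set x; y]|; last by rewrite cards2 xy.
by rewrite -sum1_card [RHS]big_mkcond /=; apply: eq_bigr => u _; case: (u \in _).
Qed.

Lemma deg_gt0 u : 1 < #|T| -> 0 < deg E u.
Proof.
have [_ connE _] := treeE; move=> n1.
have /card_gt0P [u' ] : 0 < #|[set~ u]| by rewrite cardsC1; lia.
rewrite !inE => u'u; have /connectP [[|z p] /= pu u'_eq] := connE u u'.
  by rewrite u'_eq eqxx in u'u.
case/andP: pu => Euz _; apply/card_gt0P; exists [set u; z].
by rewrite inE set21 andbT.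
Qed.

Lemma sum_deg_le (U : {set T}) : 1 < #|T| ->
  \sum_(u in U) deg E u + #|~: U| <= 2 * (#|T| - 1).
Proof.
have [_ _ cardE] := treeE; move=> n1.
rewrite -cardE -handshake [X in _ <= X](bigID (mem U)) /= leq_add2l -sum1_card.
rewrite (eq_bigl (fun u => u \notin U)) => [|u]; last by rewrite inE.
by apply: leq_sum => u _; apply: deg_gt0.
Qed.

Lemma deg3_le v x y : 1 < #|T| -> v != x -> v != y -> x != y ->
  deg E v + deg E x + deg E y + (#|T| - 3) <= 2 * (#|T| - 1).
Proof.
move=> n1 vx vy xy; have := sum_deg_le (v |: [set x; y]) n1.
have vxy : v \notin [set x; y] by rewrite !inE negb_or vx vy.
rewrite big_setU1 // big_setU1 ?inE //= big_set1.
have := cardsC (v |: [set x; y]); rewrite cardsU1 vxy cards2 xy /=; lia.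
Qed.

Lemma leaf_component a v x : deg E a <= 1 -> tree_adj E a v ->
  connect (avoiding v (tree_adj E)) a x -> x = a.
Proof.
move=> deg_a Eav /connectP [[|z p] //= /andP [/and3P [_ zv Eaz] _] _].
have := card_le1_eqP deg_a [set a; z] [set a; v]; rewrite !inE !eqxx /= !andbT.
by move=> /(_ Eaz Eav) /set2_injr za; rewrite za eqxx in zv.
Qed.

Lemma exists_crossing_edge v : 1 < #|T| -> 1 < deg E v ->
  (forall x y, x != v -> y != v -> connect (avoiding v e) x y) ->
  exists x y, [/\ x != v, y != v, e x y & ~~ connect (avoiding v (tree_adj E)) x y].
Proof.
have [_ _ cardE] := treeE; move=> n1 dv conn_v.
set F := avoiding v (tree_adj E).
case: (boolP [exists x, exists y, [&& x != v, y != v, e x y & ~~ connect F x y]]).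
  by case/existsP=> x /existsP [y /and4P [xv yv exy nc]]; exists x, y.
move=> /existsPn no_cross; exfalso.
have /card_gt0P [r ] : 0 < #|[set~ v]| by rewrite cardsC1; lia.
rewrite !inE => rv.
have sub : [set~ v] \subset [set x | connect F r x].
  apply/subsetP=> x; rewrite !inE => xv; apply: connect_sub (conn_v r x rv xv).
  move=> a b /and3P [av bv eab]; have /existsPn/(_ b) := no_cross a.
  by rewrite av bv eab /= negbK.
have comp : #|[set x | connect F r x]| <= #|[set f in E | v \notin f]|.+1.
  have := @card_component _ _ (avoiding_sym v (@tree_adj_sym E)) [set f in E | v \notin f] r.
  apply=> a b /and3P [av bv Eab].
  by rewrite !inE !negb_or ![v == _]eq_sym av bv /= andbT.
have split_E : deg E v + #|[set f in E | v \notin f]| = #|E|.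
  rewrite /deg -(cardsID [set f : {set T} | v \in f] E).
  by congr (_ + _); apply: eq_card => f; rewrite !inE // andbC.
move: (subset_leq_card sub); rewrite cardsC1; lia.
Qed.

Lemma spanning_tree_exchange v x y a b (F := avoiding v (tree_adj E)) :
  x != v -> y != v -> e x y -> ~~ connect F x y ->
  connect F x a -> tree_adj E a v -> connect F y b -> tree_adj E b v ->
  spanning_tree ([set x; y] |: (E :\ [set a; v])).
Proof.
have [edgeE connE cardE] := treeE.
move=> xv yv exy nc xa Eav yb Ebv; set E' := _ |: _.
have Fsym : connect_sym F := sym_connect_sym (avoiding_sym v (@tree_adj_sym E)).
have xyE : [set x; y] \notin E.
  by apply: contra nc => Exy; apply: connect1; rewrite /F /avoiding /= xv yv.
have ab : a != b.
  by apply: contraNneq nc => a_b; apply: connect_trans xa _; rewrite a_b Fsym.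
have FE' : subrel F (tree_adj E').
  move=> p q /and3P [pv qv]; rewrite /tree_adj !inE => ->; rewrite andbT; apply/orP; right.
  apply: contraTneq (set22 a v) => <-.
  by rewrite !inE ![v == _]eq_sym (negbTE pv) (negbTE qv).
have FE'c : subrel (connect F) (connect (tree_adj E')).
  by apply: connect_sub => p q Fpq; apply: connect1; apply: FE'.
have E'av : connect (tree_adj E') a v.
  apply: connect_trans (FE'c _ _ _ : connect _ a x) _; first by rewrite Fsym.
  apply: connect_trans (connect1 (_ : tree_adj E' x y)) _; first by rewrite /tree_adj !inE eqxx.
  apply: connect_trans (FE'c _ _ yb) (connect1 _).
  move: Ebv; rewrite /tree_adj !inE => ->; rewrite andbT; apply/orP; right.
  by apply: contra_neq ab; rewrite ![[set _; v]]setUC => /set2_injr.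
split.
- move=> f; rewrite !inE => /orP [/eqP ->|/andP [_ /edgeE //]]; by exists x, y.
- move=> p q; apply: connect_sub (connE p q) => {}p {}q Epq.
  case: (eqVneq [set p; q] [set a; v]) => [pq_av|pq_av]; last first.
    by apply: connect1; move: Epq; rewrite /tree_adj !inE pq_av => ->; rewrite orbT.
  have E'sym := sym_connect_sym (@tree_adj_sym E').
  have : p \in [set a; v] by rewrite -pq_av !inE eqxx.
  case/set2P=> p_eq; move: pq_av; rewrite p_eq; last rewrite [RHS]setUC.
    by move=> /set2_injr ->.
  by move=> /set2_injr ->; rewrite E'sym.
- rewrite (cardsD1 [set a; v] E) (Eav : [set a; v] \in E) in cardE.
  by rewrite cardsU1 !inE negb_and xyE orbT /= cardE.
Qed.

Lemma exchange_step k v : 2 <= k -> #|T| <= 2 * k + 1 -> k < deg E v ->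
  (forall x y, x != v -> y != v -> connect (avoiding v e) x y) ->
  exists E', spanning_tree E' /\ excess k E' < excess k E.
Proof.
have [_ connE cardE] := treeE; move=> k2 nk dv conn_v.
have v_neq z : z != v -> v != z by rewrite eq_sym.
set F := avoiding v (tree_adj E).
have Fsym : connect_sym F := sym_connect_sym (avoiding_sym v (@tree_adj_sym E)).
have n1 : 1 < #|T|.
  have : deg E v <= #|E| by apply/subset_leq_card/subsetP => f; rewrite inE => /andP [].
  lia.
have [x [y [xv yv exy nc]]] := exists_crossing_edge n1 (ltnW (leq_ltn_trans k2 dv)) conn_v.
have xy : x != y by apply: contraTneq exy => ->; rewrite e_irr.
wlog dy : x y xv yv exy nc xy / deg E y < k.
  (* The degree sum bounds deg x + deg y by k + 1. *)
  move=> wlog_dy; case: (ltnP (deg E y) k) => dy; first exact: (wlog_dy x y).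
  apply: (wlog_dy y x) => //; [by rewrite e_sym | by rewrite Fsym | by rewrite eq_sym |].
  by have := deg3_le n1 (v_neq x xv) (v_neq y yv) xy; lia.
have [a xa Eav] := exit_neighbour (connE x y) xv nc.
have [b yb Ebv] : exists2 b, connect F y b & tree_adj E b v.
  by apply: exit_neighbour (connE y x) yv _; rewrite Fsym.
have ax : k <= deg E x -> a = x.
  (* Otherwise a is a leaf, hence alone in its component of E - v. *)
  move=> dx; case: (eqVneq x a) => // x_neq_a.
  apply/esym/(leaf_component _ Eav); last by rewrite Fsym.
  have := deg3_le n1 (v_neq x xv) (v_neq a (tree_adj_neq Eav)) x_neq_a.
  by move: dx dv nk; clear; lia.
have xyE : [set x; y] \notin E :\ [set a; v].
  rewrite in_setD1 negb_and; apply/orP; right.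
  by apply: contra nc => Exy; apply: connect1; rewrite /avoiding /= xv yv.
exists ([set x; y] |: (E :\ [set a; v])); split.
  exact: spanning_tree_exchange xv yv exy nc xa Eav yb Ebv.
exact: excess_exchange Eav xyE xv yv dv dy ax.
Qed.

Lemma spanning_tree_parent_edges r par (h : T -> nat) :
  (forall x, x != r -> tree_adj E x (par x) /\ h (par x) < h x) ->
  E = [set [set x; par x] | x in [set~ r]].
Proof.
have [_ _ cardE] := treeE; move=> parP; apply/eqP; rewrite eq_sym eqEcard.
rewrite cardE (card_parent_edges (fun x xr => proj2 (parP x xr))) leqnn andbT.
by apply/subsetP=> f /imsetP [x]; rewrite !inE => /parP [Ex _] ->.
Qed.

End Tree.

Lemma low_degree_spanning_tree k E : 2 <= k -> #|T| <= 2 * k + 1 ->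
  (forall v x y, x != v -> y != v -> connect (avoiding v e) x y) ->
  spanning_tree E -> exists2 E', spanning_tree E' & forall u, deg E' u <= k.
Proof.
move=> k2 nk conn_v; have [m] := ubnP (excess k E); elim: m E => // m IH E lt_m treeE.
case: (boolP [exists u, k < deg E u]) => [/existsP [v dv]|/existsPn low].
  have [E' [treeE' lt_excess]] := exchange_step treeE k2 nk dv (conn_v v).
  exact: IH E' (leq_trans lt_excess lt_m) treeE'.
by exists E => // u; rewrite leqNgt low.
Qed.

Lemma exists_spanning_tree r : (forall y, connect e r y) -> exists E, spanning_tree E.
Proof.
move=> conn_r; have [par [h parP]] := exists_parent_map e_sym r.
have {}parP x : x != r -> e x (par x) /\ h (par x) < h x by apply: parP (conn_r x).
set E := [set [set x; par x] | x in [set~ r]].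
have parE x : x != r -> tree_adj E x (par x).
  by move=> xr; apply/imsetP; exists x; rewrite // !inE.
have conn_E := connect_to_root (fun x xr => conj (parE x xr) (proj2 (parP x xr))).
exists E; split.
- by move=> f /imsetP [x]; rewrite !inE => /parP [e_x _] ->; exists x, (par x).
- move=> x y; apply: connect_trans (conn_E x) _.
  by rewrite (sym_connect_sym (@tree_adj_sym E)).
by apply: card_parent_edges (fun x xr => proj2 (parP x xr)).
Qed.

End SpanningTrees.

Section ParentColouring.
Variables (T : finType) (r : T) (par : T -> T) (h : T -> nat) (idx : T -> nat) (k : nat).
Hypothesis hpar : forall x, x != r -> h (par x) < h x.

(* [colour x] is the colour of the edge {x, par x}; [n] is fuel, and any
   [n > h x] yields the same value. *)
Fixpoint colour_iter n x :=
  if n is n'.+1 then (if x == r then 0 else (idx x + 1 + colour_iter n' (par x)) %% k)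
  else 0.

Definition colour x := colour_iter (\max_z h z).+1 x.

Lemma colour_iter_stable m1 m2 x :
  h x < m1 -> h x < m2 -> colour_iter m1 x = colour_iter m2 x.
Proof.
elim: m1 m2 x => [|m1 IH] [|m2] x //= lt1 lt2; case: (eqVneq x r) => // xr.
have hx := hpar xr; by rewrite (IH m2) //; lia.
Qed.

Lemma colour_par x : x != r -> colour x = (idx x + 1 + colour (par x)) %% k.
Proof.
move=> xr; rewrite /colour /= (negbTE xr) (@colour_iter_stable _ (\max_z h z).+1) //;
  by have := hpar xr; have := @leq_bigmax _ h x; lia.
Qed.

Lemma colour_lt x : 0 < k -> colour x < k.
Proof.
case: (eqVneq x r) => [->|xr] k0; first by rewrite /colour /= eqxx.
by rewrite colour_par // ltn_pmod.
Qed.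

Lemma colour_child_neq x : x != r -> idx x < k.-1 -> colour x != colour (par x).
Proof.
move=> xr lt_idx; have /colour_lt lt_k : 0 < k by lia.
rewrite colour_par // -[X in _ != X](modn_small (lt_k (par x))).
by rewrite -[X in _ != X %% _]add0n eqn_modDr mod0n modn_small; lia.
Qed.

Lemma colour_sibling_neq x y : x != r -> y != r -> par x = par y ->
  idx x < k -> idx y < k -> idx x != idx y -> colour x != colour y.
Proof.
move=> xr yr pxy lt_x lt_y neq_idx.
by rewrite (colour_par xr) (colour_par yr) pxy -!addnA eqn_modDr !modn_small.
Qed.

End ParentColouring.

Section TreeColouring.
Variables (T : finType) (e : rel T) (E : {set {set T}}) (r : T) (par : T -> T) (h : T -> nat).
Hypothesis treeE : spanning_tree e E.
Hypothesis parP : forall x, x != r -> tree_adj E x (par x) /\ h (par x) < h x.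

Let hpar x (xr : x != r) : h (par x) < h x := proj2 (parP xr).

Definition children p := [set x | (x != r) && (par x == p)].

Definition child_index x := index x (enum (children (par x))).

Lemma child_index_lt x : x != r -> child_index x < #|children (par x)|.
Proof. by move=> xr; rewrite cardE index_mem mem_enum !inE xr eqxx. Qed.

Lemma child_index_inj x y : x != r -> y != r -> par x = par y ->
  child_index x = child_index y -> x = y.
Proof.
rewrite /child_index => xr yr pxy; rewrite pxy => /(congr1 (nth x (enum (children (par y))))).
by rewrite !nth_index // mem_enum !inE ?xr ?yr -?pxy eqxx.
Qed.

Lemma card_children p : #|children p| + (p != r) <= deg E p.
Proof.
set D := [set [set x; par x] | x in children p].
have cardD : #|D| = #|children p|.
  apply: card_in_imset; apply: (@parent_edge_inj _ _ h) => x.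
  by rewrite inE => /andP [/hpar].
have subD : D \subset [set f in E | p \in f].
  apply/subsetP=> f /imsetP [x]; rewrite inE => /andP [xr /eqP <-] ->.
  by rewrite inE set22 andbT; case: (parP xr).
case: (eqVneq p r) => [_|pr]; first by rewrite addn0 -cardD; apply: subset_leq_card.
have pD : [set p; par p] \notin D.
  apply/negP=> /imsetP [x]; rewrite inE => /andP [xr /eqP px].
  rewrite px [[set x; p]]setUC => /set2_injr ppx.
  by have := hpar xr; have := hpar pr; rewrite px -ppx; lia.
have pE : [set p; par p] \in [set f in E | p \in f].
  by rewrite inE set21 andbT; case: (parP pr).
have := subset_leq_card (_ : [set p; par p] |: D \subset _).
by rewrite cardsU1 pD cardD addnC; apply; apply/subsetP=> f /setU1P [->|/(subsetP subD)].
Qed.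

Lemma parent_edges_meet x y : x != y -> [set x; par x] :&: [set y; par y] != set0 ->
  [\/ x = par y, y = par x | par x = par y].
Proof.
move=> xy /set0Pn [w]; rewrite !inE => /andP [/orP [] /eqP -> /orP [] /eqP w_eq].
- by rewrite w_eq eqxx in xy.
- by constructor 1.
- by constructor 2.
- by constructor 3.
Qed.

Lemma tree_proper_colouring k : 0 < k -> (forall u, deg E u <= k) ->
  exists c : {ffun {set T} -> 'I_k}, proper_on c E.
Proof.
case: k => // k _ deg_le.
pose col := colour r par h child_index k.+1.
have par_inj : {in [set~ r] &, injective (fun x => [set x; par x])}.
  by apply: (@parent_edge_inj _ _ h) => y; rewrite !inE => /hpar.
pose c := [ffun f => inord (col (odflt r [pick x | (x != r) && (f == [set x; par x])]))
  : 'I_k.+1].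
have cE x : x != r -> c [set x; par x] = inord (col x).
  move=> xr; rewrite ffunE; case: pickP => [x' /andP [x'r /eqP eq_x']|/(_ x)]; last first.
    by rewrite xr eqxx.
  by congr (inord (col _)); apply: par_inj; rewrite ?inE.
exists c; rewrite /proper_on (spanning_tree_parent_edges treeE parP).
apply/forall_inP=> _ /imsetP [x xr ->]; apply/forall_inP=> _ /imsetP [y yr ->].
rewrite !inE in xr yr; rewrite (cE x xr) (cE y yr); apply/implyP=> /andP [neq meet].
have xy : x != y by apply: contraNneq neq => ->.
have lt_col z : col z < k.+1 by apply: colour_lt.
apply: contra_neq (_ : col x != col y) => [/(congr1 val)|]; first by rewrite /= !inordK.
have idx_lt z : z != r -> child_index z < k.+1 - (par z != r).
  move=> zr; have := card_children (par z); have := deg_le (par z).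
  by have := child_index_lt zr; lia.
have child_neq z : z != r -> par z != r -> col z != col (par z).
  move=> zr pzr; apply: colour_child_neq => //; have := idx_lt z zr; rewrite pzr /=; lia.
case: (parent_edges_meet xy meet) => [x_py|y_px|pxy].
- by rewrite x_py eq_sym; apply: child_neq yr _; rewrite -x_py.
- by rewrite y_px; apply: child_neq xr _; rewrite -y_px.
have idx_neq : child_index x != child_index y.
  by apply: contra_neq xy; apply: child_index_inj xr yr pxy.
apply: colour_sibling_neq pxy _ _ idx_neq => //.
  by have := idx_lt _ xr; lia.
by have := idx_lt _ yr; lia.
Qed.

End TreeColouring.

Section ThreeProper.
Variables (T : finType) (e : rel T).

Lemma spanning_tree_three_proper k (c : {ffun {set T} -> 'I_k}) E :
  0 < #|T| -> spanning_tree e E -> proper_on c E -> three_proper e c.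
Proof.
move=> n0 treeE properE; apply/forallP=> S; apply/implyP=> _.
apply/existsP; exists setT; apply/existsP; exists E.
by rewrite spanning_tree_subtree // subsetT.
Qed.

Lemma spanning_tree_k_three_proper k E : 0 < #|T| -> 0 < k -> spanning_tree e E ->
  (forall u, deg E u <= k) -> k_three_proper e k.
Proof.
move=> n0 k0 treeE deg_le; have [r _] := card_gt0P n0; have [_ connE _] := treeE.
have [par [h parP]] := exists_parent_map (@tree_adj_sym _ E) r.
have [c properE] := tree_proper_colouring treeE (fun x => parP x (connE r x)) k0 deg_le.
by apply/existsP; exists c; apply: spanning_tree_three_proper properE.
Qed.

Lemma px3_leq k : k <= #|{set T}| -> k_three_proper e k -> px3 e <= k.
Proof.
rewrite /px3 => k_le k3; case: leqP => // /(before_find 0).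
by rewrite nth_iota ?add0n ?k3.
Qed.

End ThreeProper.

Theorem theorem4p2 (T : finType) (e : rel T)
  (esym : symmetric e) (eirr : irreflexive e)
  (hn : 4 <= #|T|) (h2 : two_connected e) (hH : ~ hamiltonian e) :
  px3 e <= #|T| %/ 2.
Proof.
have [_ conn conn_v] := two_connected_connect h2.
have n0 : 0 < #|T| by lia.
have [r _] := card_gt0P n0.
have [E0 treeE0] := exists_spanning_tree esym (conn r).
have k2 : 2 <= #|T| %/ 2 by lia.
have nk : #|T| <= 2 * (#|T| %/ 2) + 1 by lia.
have [E treeE deg_le] := low_degree_spanning_tree esym eirr k2 nk conn_v treeE0.
apply: px3_leq; last exact: spanning_tree_k_three_proper n0 (ltnW k2) treeE deg_le.
exact: leq_trans (leq_div _ _) (leq_card _ (@set1_inj T)).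
Qed.
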